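(* Let $\Gamma\in\mathcal S$ have $n$ vertices and let $\varphi$ be an embedding into $\mathbb Z^n$ such that exactly one index is of type (9), exactly one is of type (5), exactly one index $k$ is of type (2), and every other index is of type (4) or (7). Let $v$ be the unique vertex whose image $\varphi(v)$ has nonzero coefficient at $E_k$. Then $d(v)=-2$; in fact $\varphi(v)=E_{i_v}-E_k$ for some index $i_v$.
   Context: A plumbing tree is a finite tree $\Gamma$ each of whose vertices $v$ carries an integer decoration $d(v)$. $\Gamma$ is minimal if no vertex has decoration $-1$. For $n\ge 1$ let $(\mathbb Z^n,Q_n)$ be the lattice with basis $E_1,\dots,E_n$ and $Q_n(E_i,E_j)=-\delta_{ij}$, and let $K=\sum_{i=1}^n E_i$. A plumbing tree $\Gamma$ on $n$ vertices is a symplectic plumbing tree if there is a map $\varphi$ (an embedding) from its vertex set to $\mathbb Z^n$ such that: for distinct vertices $v_1,v_2$, $Q_n(\varphi(v_1),\varphi(v_2))$ is $1$ if they are adjacent and $0$ otherwise; $Q_n(\varphi(v),\varphi(v))=d(v)$ for every $v$; and $Q_n(\varphi(v),K)+Q_n(\varphi(v),\varphi(v))=-2$ for every $v$. $\mathcal S$ is the set of minimal, connected symplectic plumbing trees. Index types: write $\varphi(v)=\sum_i a_{v,i}E_i$; for an index $i$ consider the multiset of nonzero coefficients $a_{v,i}$ as $v$ ranges over all vertices. Index $i$ is of type (1) if this multiset is $\{1\}$, (2) if $\{-1\}$, (3) if $\{-2\}$, (4) if $\{1,-1\}$, (5) if $\{1,-2\}$, (6) if $\{-1,-1\}$, (7)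 if $\{1,-1,-1\}$, (9) if $\{1,-1,-1,-1\}$, and (10) if it is empty. *)

From mathcomp Require Import all_boot all_order all_algebra.
Set Implicit Arguments. Unset Strict Implicit. Unset Printing Implicit Defensive.
Import Order.TTheory GRing.Theory Num.Theory.
Local Open Scope ring_scope.

(* A plumbing graph on n vertices: vertex set 'I_n, adjacency relation adj,
   decoration d.  Vectors of Z^n are functions 'I_n -> int. *)

Definition simple_graph (n : nat) (adj : rel 'I_n) : Prop :=
  (forall x y, adj x y = adj y x) /\ (forall x, ~~ adj x x).

Definition graph_connected (n : nat) (adj : rel 'I_n) : Prop :=
  forall x y, connect adj x y.

(* A cycle: distinct vertices x, s_1, ..., s_m (m >= 2) consecutive adjacent,
   with the last adjacent to x. *)
Definition acyclic (n : nat) (adj : rel 'I_n) : Prop :=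
  forall (x : 'I_n) (s : seq 'I_n),
    uniq (x :: s) -> (2 <= size s)%N -> path adj x s -> ~~ adj (last x s) x.

Definition is_tree (n : nat) (adj : rel 'I_n) : Prop :=
  simple_graph adj /\ graph_connected adj /\ acyclic adj.

Definition Qn (n : nat) (x y : 'I_n -> int) : int := - \sum_(i < n) x i * y i.

Definition E (n : nat) (i : 'I_n) : 'I_n -> int := fun j => (i == j)%:Z.

Definition Kvec (n : nat) : 'I_n -> int := fun _ => 1.

Definition minimal (n : nat) (d : 'I_n -> int) : Prop := forall v, d v != -1.

Definition symplectic_embedding (n : nat) (adj : rel 'I_n) (d : 'I_n -> int)
    (phi : 'I_n -> 'I_n -> int) : Prop :=
  (forall v1 v2, v1 != v2 -> Qn (phi v1) (phi v2) = (adj v1 v2)%:Z) /\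
  (forall v, Qn (phi v) (phi v) = d v) /\
  (forall v, Qn (phi v) (@Kvec n) + Qn (phi v) (phi v) = -2).

(* The multiset (as a sequence, compared up to permutation) of nonzero
   coefficients at index i, over all vertices. *)
Definition coeffs (n : nat) (phi : 'I_n -> 'I_n -> int) (i : 'I_n) : seq int :=
  [seq phi v i | v <- enum 'I_n & phi v i != 0].

Definition index_type (n : nat) (phi : 'I_n -> 'I_n -> int) (i : 'I_n)
    (m : seq int) : bool := perm_eq (coeffs phi i) m.

Definition type2 n phi i := @index_type n phi i [:: -1].
Definition type4 n phi i := @index_type n phi i [:: 1; -1].
Definition type5 n phi i := @index_type n phi i [:: 1; -2].
Definition type7 n phi i := @index_type n phi i [:: 1; -1; -1].
Definition type9 n phi i := @index_type n phi i [:: 1; -1; -1; -1].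

(* Write a_u for the image of the vertex u, viewed in Q^n, so that a_u.a_u' = -[u ~ u'] for u <> u',
   |a_u|^2 = -d(u) >= 2, and sum_c a_u,c + |a_u|^2 = 2.  Since k is of type (2), v is the only
   vertex meeting E_k and a_v,k = -1.  The n vectors a_u restricted to the coordinates c <> k are
   linearly dependent; because their Gram matrix has nonpositive off-diagonal entries, the absolute
   values of a dependency again form one, and since the tree is connected that dependency w is
   positive everywhere.  Pairing the adjunction formula with w gives
   sum_u (|a_u|^2 - 2) w_u = w_v, a sum of nonnegative terms.  The vertex y carrying the coefficient
   -2 of the type (5) index has |a_y|^2 >= 4, which forces y <> v and |a_v|^2 < 3, i.e.
   |a_v|^2 = 2, and then a_v = E_i - E_k.  Only connectivity, the type (2) index and the existence
   of a type (5) index are needed. *)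

From mathcomp Require Import all_boot all_order all_algebra.
From mathcomp Require Import ring lra zify.
Set Implicit Arguments. Unset Strict Implicit. Unset Printing Implicit Defensive.
Import Order.TTheory GRing.Theory Num.Theory.
Local Open Scope ring_scope.

Definition dot (R : pzSemiRingType) (n : nat) (x y : 'I_n -> R) : R :=
  \sum_i x i * y i.

Lemma Qn_dot (n : nat) (x y : 'I_n -> int) : Qn x y = - dot x y.
Proof. by []. Qed.

Lemma Qn_Kvec (n : nat) (x : 'I_n -> int) : Qn x (@Kvec n) = - \sum_i x i.
Proof. by congr (- _); apply: eq_bigr => i _; rewrite mulr1. Qed.

Lemma intr_dot (R : pzRingType) (n : nat) (x y : 'I_n -> int) :
  (dot x y)%:~R = dot (fun i => (x i)%:~R) (fun i => (y i)%:~R) :> R.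
Proof. by rewrite /dot rmorph_sum; apply: eq_bigr => i _; rewrite rmorphM. Qed.

Lemma dot_self_ge0 (R : realDomainType) (n : nat) (x : 'I_n -> R) :
  0 <= dot x x.
Proof. by apply: sumr_ge0 => i _; rewrite -expr2 sqr_ge0. Qed.

Lemma sqr_le_dot_self (R : realDomainType) (n : nat) (x : 'I_n -> R) i :
  x i ^+ 2 <= dot x x.
Proof.
rewrite /dot (bigD1 i) //= expr2 lerDl.
by apply: sumr_ge0 => j _; rewrite -expr2 sqr_ge0.
Qed.

Lemma dot_self_eq0 (R : realDomainType) (n : nat) (x : 'I_n -> R) :
  dot x x = 0 -> forall i, x i = 0.
Proof.
move=> x0 i; apply/eqP; rewrite -sqrf_eq0; apply/eqP.
by apply: (psumr_eq0P _ x0) => // j _; rewrite -expr2 sqr_ge0.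
Qed.

Lemma dot_self_ge2 (n : nat) (x : 'I_n -> int) :
  dot x x != 1 -> \sum_i x i + dot x x = 2 -> 2 <= dot x x.
Proof.
move=> x_ne1 adjunction; have x_ge0 := dot_self_ge0 x.
have x_ne0 : dot x x != 0.
  apply: contra_eqN adjunction => /eqP x0.
  by rewrite x0 big1 // => i _; rewrite (dot_self_eq0 x0).
by move: x_ge0 x_ne0 x_ne1; move: (dot x x) => s; lia.
Qed.

Lemma dot_self_eq1 (n : nat) (x : 'I_n -> int) :
  dot x x = 1 -> \sum_j x j = 1 -> exists i, forall j, x j = E i j.
Proof.
move=> x1 sum1.
have [i xi_ne0] : exists i, x i != 0.
  apply/existsP; apply: contraTT isT => /existsPn x0.
  by move: x1; rewrite /dot big1 // => j _; rewrite (eqP (negbNE (x0 j))) mul0r.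
have rest0 : \sum_(j | j != i) x j * x j = 0.
  have rest_ge0 : 0 <= \sum_(j | j != i) x j * x j.
    by apply: sumr_ge0 => j _; rewrite -expr2 sqr_ge0.
  move: x1 xi_ne0 rest_ge0; rewrite /dot (bigD1 i) //=.
  move: (\sum_(j | j != i) _) (x i) => s xi /eqP; nia.
have xj0 j : j != i -> x j = 0.
  move=> ji; apply/eqP; rewrite -sqrf_eq0; apply/eqP.
  by apply: (psumr_eq0P _ rest0) => // l _; rewrite -expr2 sqr_ge0.
exists i => j; rewrite /E; case: (eqVneq i j) => [<-|ij]; last first.
  by rewrite xj0 // eq_sym.
by move: sum1; rewrite (bigD1 i) //= big1 ?addr0 // => l /xj0.
Qed.

Lemma dot_self_eq2_sum0 (n : nat) (x : 'I_n -> int) (k : 'I_n) :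
  x k = -1 -> dot x x = 2 -> \sum_j x j = 0 ->
  exists i, forall j, x j = E i j - E k j.
Proof.
move=> xk x2 sum0; pose x' j := x j + E k j.
have x'_off j : j != k -> x' j = x j.
  by rewrite /x' /E eq_sym => /negbTE ->; rewrite addr0.
have x'k : x' k = 0 by rewrite /x' xk /E eqxx.
have sum_off (F : int -> int) : \sum_j F (x' j) = F 0 + \sum_(j | j != k) F (x j).
  by rewrite (bigD1 k) //= x'k; congr (_ + _); apply: eq_bigr => j /x'_off ->.
have [||i x'E] := @dot_self_eq1 n x'.
- move: x2; rewrite /dot (sum_off (fun t => t * t)) (bigD1 k) //= xk /=.
  by move: (\sum_(j | j != k) _) => s; lia.
- move: sum0; rewrite (sum_off id) (bigD1 k) //= xk /=.
  by move: (\sum_(j | j != k) _) => s; lia.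
- by exists i => j; rewrite -x'E /x' addrK.
Qed.

Lemma exists_relation_off_coord (F : fieldType) (n : nat) (k : 'I_n)
    (a : 'I_n -> 'I_n -> F) :
  exists2 z : 'I_n -> F, (exists u, z u != 0) &
    forall c, c != k -> \sum_u z u * a u c = 0.
Proof.
pose A : 'M[F]_n := \matrix_(u, c) (if c == k then 0 else a u c).
have detA0 : \det A = 0.
  by rewrite (expand_det_col _ k) big1 // => u _; rewrite mxE eqxx mul0r.
have : kermx A != 0 by rewrite kermx_eq0 row_free_unit unitmxE detA0 unitr0.
case/matrix0Pn => i [j kerA_ij].
exists (fun u => kermx A i u); first by exists j.
move=> c ck.
have /matrixP/(_ 0 c) : row i (kermx A) *m A = 0 by apply/sub_kermxP; rewrite row_sub.
rewrite !mxE => kerA_c; apply: etrans kerA_c.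
by apply: eq_bigr => u _; rewrite !mxE (negbTE ck).
Qed.

Section PositiveRelation.

Variables (R : realFieldType) (n : nat) (adj : rel 'I_n).
Variables (a : 'I_n -> 'I_n -> R) (k v : 'I_n).
Hypothesis adj_connected : forall x y, connect adj x y.
Hypothesis dot_offdiag :
  forall u u', u != u' -> dot (a u) (a u') = - (adj u u')%:R.
Hypothesis k_support : forall u, a u k != 0 -> u = v.

Let gram_off_k u u' := \sum_(c | c != k) a u c * a u' c.
Let relation_off_k (z : 'I_n -> R) := forall c, c != k -> \sum_u z u * a u c = 0.

Lemma gram_off_k_offdiag u u' : u != u' -> gram_off_k u u' = - (adj u u')%:R.
Proof.
move=> uu'; rewrite -dot_offdiag // /dot (bigD1 k) //=.
suff -> : a u k * a u' k = 0 by rewrite add0r.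
case: (eqVneq (a u k) 0) => [->|/k_support uv]; first by rewrite mul0r.
case: (eqVneq (a u' k) 0) => [->|/k_support u'v]; first by rewrite mulr0.
by move: uu'; rewrite uv u'v eqxx.
Qed.

Lemma sum_sqr_off_k (z : 'I_n -> R) :
  \sum_(c | c != k) (\sum_u z u * a u c) ^+ 2 =
  \sum_u \sum_u' z u * z u' * gram_off_k u u'.
Proof.
under eq_bigr => c _ do rewrite expr2 mulr_suml; rewrite exchange_big.
apply: eq_bigr => u _; under [RHS]eq_bigr => u' _ do rewrite mulr_sumr.
rewrite [RHS]exchange_big; apply: eq_bigr => c _.
by rewrite mulr_sumr; apply: eq_bigr => u' _; ring.
Qed.

(* Passing to absolute values only lowers the quadratic form, as its off-diagonal part is <= 0. *)
Lemma relation_off_k_norm (z : 'I_n -> R) :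
  relation_off_k z -> relation_off_k (fun u => `|z u|).
Proof.
move=> zrel.
have sqr_ge0_off_k (y : 'I_n -> R) c : c != k -> 0 <= (\sum_u y u * a u c) ^+ 2.
  by move=> _; apply: sqr_ge0.
have z0 : \sum_(c | c != k) (\sum_u z u * a u c) ^+ 2 = 0.
  by rewrite big1 // => c ck; rewrite zrel // expr0n.
have norm0 : \sum_(c | c != k) (\sum_u `|z u| * a u c) ^+ 2 = 0.
  apply/eqP; rewrite eq_le sumr_ge0 ?andbT; last exact: sqr_ge0_off_k.
  rewrite -[X in _ <= X]z0 !sum_sqr_off_k; apply: ler_sum => u _; apply: ler_sum => u' _.
  case: (eqVneq u u') => [<-|uu']; first by rewrite -normrM ger0_norm // -expr2 sqr_ge0.
  rewrite gram_off_k_offdiag // !mulrN lerN2.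
  by apply: ler_wpM2r; [apply: ler0n | rewrite -normrM ler_norm].
move=> c ck; apply/eqP; rewrite -sqrf_eq0; apply/eqP.
exact: (psumr_eq0P (sqr_ge0_off_k _) norm0).
Qed.

Lemma relation_off_k_gram (w : 'I_n -> R) u :
  relation_off_k w -> \sum_u' w u' * gram_off_k u u' = 0.
Proof.
move=> wrel; under eq_bigr => u' _ do rewrite mulr_sumr.
rewrite exchange_big big1 // => c ck.
by under eq_bigr => u' _ do rewrite mulrCA; rewrite -mulr_sumr wrel // mulr0.
Qed.

Lemma relation_off_k_zero_adj (w : 'I_n -> R) u u' :
  (forall x, 0 <= w x) -> relation_off_k w -> w u = 0 -> adj u u' -> w u' = 0.
Proof.
move=> w_ge0 wrel wu0 uu'; case: (eqVneq u' u) => [->//|u'u].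
have := relation_off_k_gram u wrel; rewrite (bigD1 u) //= wu0 mul0r add0r.
under eq_bigr => x xu do rewrite gram_off_k_offdiag 1?eq_sym // mulrN.
rewrite sumrN => /eqP; rewrite oppr_eq0 => /eqP /psumr_eq0P /(_ u' u'u).
by rewrite uu' mulr1; apply => x _; apply: mulr_ge0.
Qed.

Lemma positive_relation_off_coord :
  exists2 w : 'I_n -> R, (forall u, 0 < w u) &
    forall c, c != k -> \sum_u w u * a u c = 0.
Proof.
have [z [j zj] zrel] := exists_relation_off_coord k a.
exists (fun u => `|z u|); last exact: relation_off_k_norm.
move=> u; rewrite lt_def normr_ge0 andbT; apply: contra_neq zj => zu0.
apply/eqP; rewrite -normr_eq0; apply/eqP.
have /connectP [p adj_p ->] := adj_connected u j.
elim: p u adj_p zu0 => [u _ /= -> //|x p IHp u /= /andP [ux adj_p] zu0].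
apply: (IHp x adj_p).
exact: (relation_off_k_zero_adj (fun=> normr_ge0 _) (relation_off_k_norm zrel) zu0 ux).
Qed.

Hypothesis adjunction : forall u, \sum_c a u c + dot (a u) (a u) = 2.

(* By the adjunction formula the left side is -sum_c (sum_u w_u a_u,c), and only c = k survives. *)
Lemma excess_weighted_sum (w : 'I_n -> R) :
  relation_off_k w -> \sum_u (dot (a u) (a u) - 2) * w u = - (a v k * w v).
Proof.
move=> wrel; have excess u : dot (a u) (a u) - 2 = - \sum_c a u c.
  by have := adjunction u; lra.
under eq_bigr => u _ do rewrite excess mulNr mulr_suml.
rewrite sumrN exchange_big (bigD1 k) //= [X in _ + X]big1 ?addr0; last first.
  by move=> c ck; under eq_bigr => u _ do rewrite mulrC; apply: wrel.
rewrite (bigD1 v) //= big1 ?addr0 // => u uv.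
by case: (eqVneq (a u k) 0) => [->|/k_support uv']; [rewrite mul0r | rewrite uv' eqxx in uv].
Qed.

Lemma dot_self_lt3 (y : 'I_n) :
  (forall u, 2 <= dot (a u) (a u)) -> a v k = -1 -> 4 <= dot (a y) (a y) ->
  dot (a v) (a v) < 3.
Proof.
move=> dot_ge2 avk heavy_y; have [w w_gt0 wrel] := positive_relation_off_coord.
have := excess_weighted_sum wrel; rewrite avk mulN1r opprK.
have excess_ge0 P : 0 <= \sum_(u | P u) (dot (a u) (a u) - 2) * w u.
  by apply: sumr_ge0 => u _; rewrite mulr_ge0 ?subr_ge0 ?dot_ge2 // ltW.
have wv := w_gt0 v; have wy := w_gt0 y.
case: (eqVneq v y) => [vy|vy].
  rewrite (bigD1 v) //=; have /= := excess_ge0 (fun u => u != v).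
  by move: heavy_y; rewrite -vy; nra.
rewrite (bigD1 v) //= (bigD1 y) /=; last by rewrite eq_sym.
have /= := excess_ge0 (fun u => (u != v) && (u != y)); nra.
Qed.
End PositiveRelation.

Lemma int_dot_self_eq2 (n : nat) (adj : rel 'I_n) (x : 'I_n -> 'I_n -> int)
    (k v y : 'I_n) :
  (forall u u', connect adj u u') ->
  (forall u u', u != u' -> dot (x u) (x u') = - (adj u u')%:Z) ->
  (forall u, \sum_c x u c + dot (x u) (x u) = 2) ->
  (forall u, 2 <= dot (x u) (x u)) ->
  (forall u, x u k != 0 -> u = v) -> x v k = -1 -> 4 <= dot (x y) (x y) ->
  dot (x v) (x v) = 2.
Proof.
move=> conn offdiag adjunction dot_ge2 k_support xvk heavy_y.
pose a u c : rat := (x u c)%:~R.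
have dot_a u u' : dot (a u) (a u') = (dot (x u) (x u'))%:~R by rewrite intr_dot.
have heavy_a : 4 <= dot (a y) (a y) by rewrite dot_a (ler_int _ 4).
have : dot (a v) (a v) < 3.
  apply: (dot_self_lt3 (adj := adj) _ _ _ _ _ _ heavy_a) => //.
  - by move=> u u' uu'; rewrite dot_a offdiag // mulrNz; case: (adj u u').
  - by move=> u /[!intr_eq0] /k_support.
  - by move=> u; rewrite dot_a -rmorph_sum -intrD adjunction.
  - by move=> u; rewrite dot_a (ler_int _ 2).
  - by rewrite /a xvk.
rewrite dot_a (ltr_int _ _ 3); have := dot_ge2 v.
by move: (dot (x v) (x v)) => s; lia.
Qed.

Lemma coeffsP (n : nat) (phi : 'I_n -> 'I_n -> int) (i : 'I_n) (m : int) :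
  m != 0 -> reflect (exists u, phi u i = m) (m \in coeffs phi i).
Proof.
move=> m_ne0; apply: (iffP mapP) => [[u _ ->]|[u um]]; first by exists u.
by exists u; rewrite // mem_filter mem_enum andbT um.
Qed.

Lemma index_type1_coeff (n : nat) (phi : 'I_n -> 'I_n -> int) (i u : 'I_n) (m : int) :
  index_type phi i [:: m] -> phi u i != 0 -> phi u i = m.
Proof.
move=> typ nz; apply/eqP; rewrite -mem_seq1 -(perm_mem typ).
by apply/coeffsP => //; exists u.
Qed.

Lemma index_type1_support (n : nat) (phi : 'I_n -> 'I_n -> int) (i : 'I_n) (m : int)
    (u u' : 'I_n) :
  index_type phi i [:: m] -> phi u i != 0 -> phi u' i != 0 -> u = u'.
Proof.
move=> /perm_size typ nu nu'; apply/eqP; apply: contraTT isT => uu'.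
have : (size [:: u; u'] <= size [seq x <- enum 'I_n | phi x i != 0])%N.
  apply: uniq_leq_size; first by rewrite /= inE andbT.
  by move=> x; rewrite !inE mem_filter mem_enum andbT => /orP [] /eqP ->.
by move: typ; rewrite /coeffs size_map => ->.
Qed.

Theorem proposition5p4 (n : nat) (adj : rel 'I_n) (d : 'I_n -> int)
    (phi : 'I_n -> 'I_n -> int) (k : 'I_n) :
  (0 < n)%N ->
  is_tree adj -> minimal d ->
  symplectic_embedding adj d phi ->
  #|[set i | type9 phi i]| = 1%N ->
  #|[set i | type5 phi i]| = 1%N ->
  type2 phi k ->
  (forall j, type2 phi j -> j = k) ->
  (forall i, ~~ type9 phi i -> ~~ type5 phi i -> ~~ type2 phi i ->
     type4 phi i || type7 phi i) ->
  forall v, phi v k != 0 ->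
    d v = -2 /\ exists iv : 'I_n, forall j, phi v j = E iv j - E k j.
Proof.
move=> _ [_ [conn _]] min_d [Q_offdiag [Q_self Q_K]] _ card5 type2k _ _ v vk.
have adjunction u : \sum_c phi u c + dot (phi u) (phi u) = 2.
  by apply: oppr_inj; rewrite opprD -Qn_Kvec -Qn_dot Q_K.
have dot_ge2 u : 2 <= dot (phi u) (phi u).
  apply: dot_self_ge2 (adjunction u).
  by apply: contra (min_d u) => /eqP dot1; rewrite -Q_self Qn_dot dot1.
have [q] : exists q, q \in [set i | type5 phi i].
  by apply/set0Pn; rewrite -card_gt0 card5.
rewrite inE => type5q.
have /coeffsP [//|y phi_yq] : -2 \in coeffs phi q by rewrite (perm_mem type5q) !inE.
have ev2 : dot (phi v) (phi v) = 2.
  apply: (int_dot_self_eq2 (y := y) conn) => //.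
  - by move=> u u' /Q_offdiag; rewrite Qn_dot => <-; rewrite opprK.
  - by move=> u uk; apply: index_type1_support type2k uk vk.
  - exact: index_type1_coeff type2k vk.
  - by have := sqr_le_dot_self (phi y) q; rewrite phi_yq.
split; first by rewrite -Q_self Qn_dot ev2.
apply: (dot_self_eq2_sum0 _ ev2); first exact: index_type1_coeff type2k vk.
by have := adjunction v; rewrite ev2; move: (\sum_c _) => s; lia.
Qed.
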